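(* Let $(X,Y,\phi)$ be an $L$-context and let $X'\subseteq X$, $Y'\subseteq Y$. Then: (1) $\mathcal{K}\phi_{X,Y'}\subseteq\mathcal{K}\phi$ (so that the map $\mathcal{K}\phi\to\mathcal{K}\phi_{X,Y'}$, $\mu\mapsto(\phi_{X,Y'})^\forall(\phi_{X,Y'})^\exists\mu$, has the inclusion $\mathcal{K}\phi_{X,Y'}\hookrightarrow\mathcal{K}\phi$ as its right adjoint). (2) For every $\mu\in\mathcal{K}\phi$ one has $\mu_{X'}\in\mathcal{K}\phi_{X',Y}$; the map $\mathcal{K}\phi_{X',Y}\to\mathcal{K}\phi$, $\mu'\mapsto\phi^\forall\phi^\exists\underline{\mu'}$, is $L$-isometric, i.e. $L^{X'}(\mu',\mu'')=L^X(\phi^\forall\phi^\exists\underline{\mu'},\phi^\forall\phi^\exists\underline{\mu''})$ for all $\mu',\mu''\in\mathcal{K}\phi_{X',Y}$; and its right adjoint is the restriction map $\mathcal{K}\phi\to\mathcal{K}\phi_{X',Y}$, $\mu\mapsto\mu_{X'}$.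
   Context: $L=(L,* )$ is a complete residuated lattice: a complete lattice with bottom $0$ and top $1$, equipped with a commutative associative operation $*$ with unit $1$ satisfying $a*\bigvee_i b_i=\bigvee_i a*b_i$; $\to$ is its residuum ($a*b\le c\iff a\le b\to c$). An $L$-context is a triple $(X,Y,\phi)$ with $X,Y$ sets and $\phi\colon X\times Y\to L$. $L^X$ denotes the set of maps $X\to L$, carrying the $L$-valued order $L^X(\mu,\mu')=\bigwedge_{x\in X}(\mu(x)\to\mu'(x))$. Define $\phi^\exists\colon L^X\to L^Y$, $(\phi^\exists\mu)(y)=\bigvee_{x\in X}\mu(x)*\phi(x,y)$, and $\phi^\forall\colon L^Y\to L^X$, $(\phi^\forall\lambda)(x)=\bigwedge_{y\in Y}(\phi(x,y)\to\lambda(y))$. The property oriented concept $L$-lattice is $\mathcal{K}\phi=\{\mu\in L^X\mid \phi^\forall\phi^\exists\mu=\mu\}$ with the $L$-order inherited from $L^X$. For $X'\subseteq X$, $Y'\subseteq Y$, $\phi_{X',Y'}$ denotes the restriction of $\phi$ to $X'\times Y'$; for $\mu\in L^X$, $\mu_{X'}$ is its restriction to $X'$; for $\mu'\in L^{X'}$, $\underline{\mu'}\in L^X$ is its extension by $0$ (equal to $\mu'(x)$ for $x\in X'$ and $0$ otherwise). A map $f$ between $L$-ordered sets $P,Q$ is $L$-isometric if $P(p,p')=Q(fp,fp')$; monotone maps $f\colon P\to Q$, $g\colon Q\to P$ are adjoint ($f\dashv g$) if $Q(fp,q)=P(p,gq)$ for all $p,q$. *)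

(* A complete residuated lattice (L, *, ->): a partial order with arbitrary
   suprema (of subsets of L, i.e. predicates), a commutative associative
   multiplication with unit the top element 1, distributing over arbitrary
   joins, and its residuum. *)
Record CRL : Type := {
  car :> Type;
  le : car -> car -> Prop;
  sup : (car -> Prop) -> car;
  mul : car -> car -> car;
  res : car -> car -> car;
  le_refl : forall a, le a a;
  le_trans : forall a b c, le a b -> le b c -> le a c;
  le_antisym : forall a b, le a b -> le b a -> a = b;
  sup_ub : forall (P : car -> Prop) a, P a -> le a (sup P);
  sup_least : forall (P : car -> Prop) b, (forall a, P a -> le a b) -> le (sup P) b;
  mulC : forall a b, mul a b = mul b a;
  mulA : forall a b c, mul a (mul b c) = mul (mul a b) c;
  mul1 : forall a, mul (sup (fun _ => True)) a = a;
  mul_sup : forall a (P : car -> Prop),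
      mul a (sup P) = sup (fun c => exists b, P b /\ c = mul a b);
  resP : forall a b c, le (mul a b) c <-> le a (res b c)
}.

Section Ops.
Context {L : CRL}.

Definition inf (P : L -> Prop) : L := sup L (fun a => forall b, P b -> le L a b).
Definition bot : L := sup L (fun _ => False).
Definition top : L := sup L (fun _ => True).

Definition isup {I : Type} (f : I -> L) : L := sup L (fun l => exists i, l = f i).
Definition iinf {I : Type} (f : I -> L) : L := inf (fun l => exists i, l = f i).

(* the L-valued order on L^X *)
Definition Lhom {X : Type} (mu mu' : X -> L) : L := iinf (fun x => res L (mu x) (mu' x)).

Context {X Y : Type}.

Definition phiE (phi : X -> Y -> L) (mu : X -> L) : Y -> L :=
  fun y => isup (fun x => mul L (mu x) (phi x y)).
Definition phiA (phi : X -> Y -> L) (lam : Y -> L) : X -> L :=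
  fun x => iinf (fun y => res L (phi x y) (lam y)).

(* mu belongs to the property oriented concept L-lattice K phi *)
Definition inK (phi : X -> Y -> L) (mu : X -> L) : Prop := phiA phi (phiE phi mu) = mu.

Definition clo (phi : X -> Y -> L) (mu : X -> L) : X -> L := phiA phi (phiE phi mu).
End Ops.

(* subsets are boolean predicates; the corresponding subtype *)
Definition subT {X : Type} (P : X -> bool) : Type := {x : X | P x = true}.

Definition restrX {L : CRL} {X Y : Type} (phi : X -> Y -> L) (X' : X -> bool)
  : subT X' -> Y -> L := fun x y => phi (proj1_sig x) y.
Definition restrY {L : CRL} {X Y : Type} (phi : X -> Y -> L) (Y' : Y -> bool)
  : X -> subT Y' -> L := fun x y => phi x (proj1_sig y).

Definition restr {L : CRL} {X : Type} (X' : X -> bool) (mu : X -> L) : subT X' -> L :=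
  fun x => mu (proj1_sig x).

Definition ext0 {L : CRL} {X : Type} (X' : X -> bool) (mu' : subT X' -> L) : X -> L :=
  fun x => (if X' x as b return X' x = b -> L
            then fun h => mu' (exist _ x h)
            else fun _ => @bot L) eq_refl.

(* Everything rests on the Galois connection [phiE phi -| phiA phi], which makes
   [clo phi] a closure operator whose closed elements form [K phi].  Since [*]
   distributes over joins the closure is also L-enriched,
   [a * clo phi mu <= clo phi (a * mu)], so for closed [nu] the L-valued order
   satisfies [Lhom (clo phi mu) nu = Lhom mu nu]: the closure is left adjoint to
   the inclusion.  Restricting to attributes [Y'] removes terms from the meet
   defining [phiA], so [clo phi <= clo phi_{X,Y'}] and closed sets for [phi_{X,Y'}]
   are closed for [phi].  Extending by [0] does not change [phiE], so
   [clo phi (ext0 mu')] restricts to [clo phi_{X',Y} mu'] on [X'], which yields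
   both the isometry and the adjunction with restriction. *)
From Stdlib Require Import Setoid FunctionalExtensionality Eqdep_dec Bool.

Section Lattice.
Context {L : CRL}.
Local Notation "a <= b" := (le L a b).
Local Notation "a * b" := (mul L a b).

Lemma iinf_lb {I} (f : I -> L) i : iinf f <= f i.
Proof. apply sup_least. intros a Ha. apply Ha. eauto. Qed.

Lemma le_iinf {I} (f : I -> L) a : a <= iinf f <-> forall i, a <= f i.
Proof.
  split.
  - intros H i. eapply le_trans; [exact H | apply iinf_lb].
  - intros H. apply sup_ub. intros b [i ->]. apply H.
Qed.

Lemma isup_ub {I} (f : I -> L) i : f i <= isup f.
Proof. apply sup_ub. eauto. Qed.

Lemma isup_le {I} (f : I -> L) a : (forall i, f i <= a) -> isup f <= a.
Proof. intros H. apply sup_least. intros b [i ->]. apply H. Qed.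

Lemma isup_comp_le {I J} (f : I -> L) (g : J -> I) : isup (fun j => f (g j)) <= isup f.
Proof. apply isup_le. intros j. apply isup_ub. Qed.

Lemma iinf_le_comp {I J} (f : I -> L) (g : J -> I) : iinf f <= iinf (fun j => f (g j)).
Proof. apply le_iinf. intros j. apply iinf_lb. Qed.

Lemma le_eq_ext (u v : L) : (forall a, a <= u <-> a <= v) -> u = v.
Proof. intros H. apply le_antisym; apply H; apply le_refl. Qed.

Lemma bot_le a : bot <= a.
Proof. apply sup_least. intros _ []. Qed.

Lemma mul_le_mono_l a b c : b <= c -> a * b <= a * c.
Proof.
  intros Hbc.
  assert (Hc : c = sup L (fun z => z = b \/ z = c)).
  { apply le_antisym.
    - apply sup_ub. auto.
    - apply sup_least. intros z [-> | ->]; [exact Hbc | apply le_refl]. }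
  rewrite Hc, mul_sup. apply sup_ub. eauto.
Qed.

Lemma mul_le_mono_r a b c : b <= c -> b * a <= c * a.
Proof. intros H. rewrite (mulC L b), (mulC L c). now apply mul_le_mono_l. Qed.

Lemma mul_bot_r a : a * bot = bot.
Proof.
  unfold bot. rewrite mul_sup. apply le_antisym; apply sup_least.
  - intros c [b [[] _]].
  - intros _ [].
Qed.

Lemma mul_res_le a b : res L a b * a <= b.
Proof. apply resP. apply le_refl. Qed.
End Lattice.

Section Closure.
Context {L : CRL}.
Local Notation "a <= b" := (le L a b).
Local Notation "a * b" := (mul L a b).

Lemma le_Lhom {X} (mu nu : X -> L) a : a <= Lhom mu nu <-> forall x, a * mu x <= nu x.
Proof. unfold Lhom. rewrite le_iinf. split; intros H x; apply resP, H. Qed.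

Context {X Y : Type} (phi : X -> Y -> L).

Lemma phiE_le_iff mu lam :
  (forall y, phiE phi mu y <= lam y) <-> (forall x, mu x <= phiA phi lam x).
Proof.
  split.
  - intros H x. apply le_iinf. intros y. apply resP.
    eapply le_trans; [| apply H]. apply (isup_ub (fun x => mu x * phi x y)).
  - intros H y. apply isup_le. intros x.
    eapply le_trans; [apply mul_le_mono_r, H |].
    apply resP, (iinf_lb (fun y => res L (phi x y) (lam y))).
Qed.

Lemma phiE_mono mu mu' : (forall x, mu x <= mu' x) -> forall y, phiE phi mu y <= phiE phi mu' y.
Proof.
  intros H y. apply isup_le. intros x.
  eapply le_trans; [apply mul_le_mono_r, H |].
  apply (isup_ub (fun x => mu' x * phi x y)).
Qed.

Lemma phiA_mono lam lam' : (forall y, lam y <= lam' y) -> forall x, phiA phi lam x <= phiA phi lam' x.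
Proof.
  intros H x. apply le_iinf. intros y.
  eapply le_trans; [apply (iinf_lb (fun y => res L (phi x y) (lam y)) y) |].
  apply resP. eapply le_trans; [apply mul_res_le | apply H].
Qed.

Lemma clo_ge mu x : mu x <= clo phi mu x.
Proof. revert x. apply phiE_le_iff. intros y. apply le_refl. Qed.

Lemma clo_mono mu mu' : (forall x, mu x <= mu' x) -> forall x, clo phi mu x <= clo phi mu' x.
Proof. intros H. apply phiA_mono, phiE_mono, H. Qed.

Lemma inK_of_clo_le mu : (forall x, clo phi mu x <= mu x) -> inK phi mu.
Proof.
  intros H. unfold inK. extensionality x.
  apply le_antisym; [apply H | apply clo_ge].
Qed.

Lemma inK_clo mu : inK phi (clo phi mu).
Proof.
  apply inK_of_clo_le. apply phiA_mono, phiE_le_iff. intros x. apply le_refl.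
Qed.

Lemma mul_clo_le a mu x : a * clo phi mu x <= clo phi (fun z => a * mu z) x.
Proof.
  apply le_iinf. intros y. apply -> resP. rewrite <- mulA.
  eapply le_trans.
  { apply mul_le_mono_l. eapply le_trans; [apply mul_le_mono_r | apply mul_res_le].
    apply (iinf_lb (fun y => res L (phi x y) (phiE phi mu y)) y). }
  unfold phiE, isup. rewrite mul_sup. apply sup_least. intros c [b [[z ->] ->]].
  rewrite mulA. apply (isup_ub (fun z => (a * mu z) * phi z y)).
Qed.

Lemma Lhom_clo mu nu : inK phi nu -> Lhom (clo phi mu) nu = Lhom mu nu.
Proof.
  intros Hnu. apply le_eq_ext. intros a. rewrite !le_Lhom. split; intros H x.
  - eapply le_trans; [apply mul_le_mono_l, clo_ge | apply H].
  - eapply le_trans; [apply mul_clo_le |]. rewrite <- Hnu. apply clo_mono, H.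
Qed.
End Closure.

Section Restriction.
Context {L : CRL} {X Y : Type} (phi : X -> Y -> L).
Local Notation "a <= b" := (le L a b).

Lemma clo_le_clo_restrY (Y' : Y -> bool) mu x : clo phi mu x <= clo (restrY phi Y') mu x.
Proof. apply (iinf_le_comp (fun y => res L (phi x y) (phiE phi mu y)) (@proj1_sig _ _)). Qed.

Lemma inK_restrY (Y' : Y -> bool) mu : inK (restrY phi Y') mu -> inK phi mu.
Proof.
  intros H. apply inK_of_clo_le. intros x.
  eapply le_trans; [apply (clo_le_clo_restrY Y') |]. unfold clo. rewrite H. apply le_refl.
Qed.

Context (X' : X -> bool).

Lemma clo_restrX_restr_le mu x' :
  clo (restrX phi X') (restr X' mu) x' <= clo phi mu (proj1_sig x').
Proof.
  apply (phiA_mono phi). intros y.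
  apply (isup_comp_le (fun x => mul L (mu x) (phi x y)) (@proj1_sig _ _)).
Qed.

Lemma inK_restr mu : inK phi mu -> inK (restrX phi X') (restr X' mu).
Proof.
  intros H. apply inK_of_clo_le. intros x'.
  eapply le_trans; [apply clo_restrX_restr_le |]. unfold clo. rewrite H. apply le_refl.
Qed.

Lemma ext0_in (mu' : subT X' -> L) x (h : X' x = true) : ext0 X' mu' x = mu' (exist _ x h).
Proof.
  unfold ext0. generalize (@eq_refl bool (X' x)). generalize (X' x) at 2 3.
  intros [|] e; [| congruence].
  do 2 f_equal. apply UIP_dec, bool_dec.
Qed.

Lemma ext0_out (mu' : subT X' -> L) x : X' x = false -> ext0 X' mu' x = bot.
Proof.
  intros h. unfold ext0. generalize (@eq_refl bool (X' x)). generalize (X' x) at 2 3.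
  intros [|] e; congruence.
Qed.

Lemma restr_ext0 (mu' : subT X' -> L) : restr X' (ext0 X' mu') = mu'.
Proof. extensionality x'. destruct x' as [x h]. apply ext0_in. Qed.

Lemma phiE_ext0 (mu' : subT X' -> L) : phiE phi (ext0 X' mu') = phiE (restrX phi X') mu'.
Proof.
  extensionality y. apply le_antisym.
  - apply isup_le. intros x. destruct (X' x) eqn:Hx.
    + rewrite (ext0_in _ _ Hx).
      apply (isup_ub (fun x' => mul L (mu' x') (restrX phi X' x' y)) (exist _ x Hx)).
    + rewrite (ext0_out _ _ Hx), mulC, mul_bot_r. apply bot_le.
  - rewrite <- (restr_ext0 mu') at 1.
    apply (isup_comp_le (fun x => mul L (ext0 X' mu' x) (phi x y)) (@proj1_sig _ _)).
Qed.

Lemma restr_clo_ext0 (mu' : subT X' -> L) :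
  restr X' (clo phi (ext0 X' mu')) = clo (restrX phi X') mu'.
Proof. unfold clo. rewrite phiE_ext0. reflexivity. Qed.

Lemma Lhom_ext0 (mu' : subT X' -> L) (nu : X -> L) : Lhom (ext0 X' mu') nu = Lhom mu' (restr X' nu).
Proof.
  apply le_eq_ext. intros a. rewrite !le_Lhom. split; intros H.
  - intros [x h]. specialize (H x). rewrite (ext0_in _ _ h) in H. exact H.
  - intros x. destruct (X' x) eqn:Hx.
    + rewrite (ext0_in _ _ Hx). apply (H (exist _ x Hx)).
    + rewrite (ext0_out _ _ Hx), mul_bot_r. apply bot_le.
Qed.
End Restriction.

Theorem mainTheorem1 (L : CRL) (X Y : Type) (phi : X -> Y -> L)
    (X' : X -> bool) (Y' : Y -> bool) :
  (* (1) *)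
  ((forall mu : X -> L, inK (restrY phi Y') mu -> inK phi mu) /\
   (forall mu : X -> L, inK phi mu -> inK (restrY phi Y') (clo (restrY phi Y') mu)) /\
   (forall mu nu : X -> L, inK phi mu -> inK (restrY phi Y') nu ->
      Lhom (clo (restrY phi Y') mu) nu = Lhom mu nu)) /\
  (* (2) *)
  ((forall mu : X -> L, inK phi mu -> inK (restrX phi X') (restr X' mu)) /\
   (forall mu' : subT X' -> L, inK (restrX phi X') mu' -> inK phi (clo phi (ext0 X' mu'))) /\
   (forall mu' mu'' : subT X' -> L, inK (restrX phi X') mu' -> inK (restrX phi X') mu'' ->
      Lhom mu' mu'' = Lhom (clo phi (ext0 X' mu')) (clo phi (ext0 X' mu''))) /\
   (forall (mu' : subT X' -> L) (mu : X -> L), inK (restrX phi X') mu' -> inK phi mu ->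
      Lhom (clo phi (ext0 X' mu')) mu = Lhom mu' (restr X' mu))).
Proof.
  split; [split; [| split] | split; [| split; [| split]]].
  - apply inK_restrY.
  - intros mu _. apply inK_clo.
  - intros mu nu _ Hnu. now apply Lhom_clo.
  - apply inK_restr.
  - intros mu' _. apply inK_clo.
  - intros mu' mu'' _ Hmu''.
    rewrite Lhom_clo, Lhom_ext0, restr_clo_ext0, Hmu''; [reflexivity | apply inK_clo].
  - intros mu' mu _ Hmu. rewrite Lhom_clo by exact Hmu. apply Lhom_ext0.
Qed.
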